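(* Let $G$ be a group with a subgroup $\Gamma$ of index $m$ and a subgroup $H\lhd\Gamma$ of cardinality $d$ such that $\Gamma/H$ is abelian, and let $F=(F_n)_{n=1}^\infty$ be a left-Følner sequence for $G$. Then $\textup{cr}_F(G)\ge\frac{1}{m^2d}$.
   Context: $F$ is a left-Følner sequence if each $F_n$ is a finite subset of $G$ and $|xF_n\triangle F_n|/|F_n|\to0$ for every $x\in G$. With $\mathcal{C}(G)$ the set of conjugacy classes of $G$, $\textup{cr}_F(G)=\limsup_{n\to\infty}\frac{|\{C\in\mathcal{C}(G):C\cap F_n\ne\varnothing\}|}{|F_n|}$. *)

From HB Require Import structures.
From mathcomp Require Import all_boot all_order all_algebra finmap.
From mathcomp Require Import all_classical all_reals all_analysis.

Set Implicit Arguments.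
Unset Strict Implicit.
Unset Printing Implicit Defensive.

Import Order.TTheory GRing.Theory Num.Theory.

Local Open Scope classical_set_scope.
Local Open Scope ring_scope.

Section Defs.
Variable G : groupType.

Definition is_subgroup (S : set G) : Prop :=
  S 1%g /\ (forall x y, S x -> S y -> S (x * y^-1)%g).

Definition lcoset (g : G) (S : set G) : set G := [set (g * s)%g | s in S].

Definition has_index (Gamma : set G) (m : nat) : Prop :=
  ([set lcoset g Gamma | g in [set: G]] #= `I_m)%card.

Definition has_card (S : set G) (d : nat) : Prop := (S #= `I_d)%card.

Definition normal_in (H Gamma : set G) : Prop :=
  is_subgroup H /\ H `<=` Gamma /\ (forall g h, Gamma g -> H h -> H (h ^ g)%g).

(* Gamma/H is abelian: cosets (aH)(bH) = (ab)H commute *)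
Definition quotient_abelian (Gamma H : set G) : Prop :=
  forall a b, Gamma a -> Gamma b -> lcoset (a * b)%g H = lcoset (b * a)%g H.

Definition ltrans (x : G) (F : {fset G}) : {fset G} := [fset (x * y)%g | y in F]%fset.

Definition symdiff (A B : {fset G}) : {fset G} := ((A `\` B) `|` (B `\` A))%fset.

Definition left_Folner (R : realType) (F : nat -> {fset G}) : Prop :=
  (forall n, F n != fset0) /\
  forall x : G,
    let u : R ^nat := fun n =>
      (#|` symdiff (ltrans x (F n)) (F n)|)%:R / (#|` F n|)%:R in
    (u @ \oo --> 0)%classic.

Definition conjclass (x : G) : set G := [set (x ^ g)%g | g in [set: G]].

Definition nclasses_meeting (F : {fset G}) : nat :=
  #|` [fset conjclass x | x in F]%fset |.

Definition cr (R : realType) (F : nat -> {fset G}) : \bar R :=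
  limn_esup (fun n => ((nclasses_meeting (F n))%:R / (#|` F n|)%:R : R)%:E).

End Defs.

(* Fix left coset representatives x_1, ..., x_m of Gamma and list H as
   y_1, ..., y_d.  Up to the Folner defects |x_i^-1 F Δ F|, a finite set F is
   covered by m translates of F ∩ Gamma.  Every a in Gamma equals r^(x_i) y_j,
   where r is a fixed representative of the G-class of a: writing the
   conjugator as x_i c with c in Gamma, conjugating by c only moves r^(x_i)
   inside its H-coset because Gamma/H is abelian.  Hence
   |F| <= m^2 d (number of classes meeting F) + o(|F|) along a Folner
   sequence, and the limsup of the ratio is at least 1/(m^2 d). *)

From HB Require Import structures.
From mathcomp Require Import all_boot all_order all_algebra finmap.
From mathcomp Require Import all_classical all_reals all_analysis.
From mathcomp Require Import zify.

Set Implicit Arguments.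
Unset Strict Implicit.
Unset Printing Implicit Defensive.

Import Order.TTheory GRing.Theory Num.Theory.
Local Open Scope classical_set_scope.
Local Open Scope ring_scope.

Lemma card_eq_enum (T : choiceType) (x0 : T) (A : set T) n :
  (A #= `I_n)%card -> exists h : nat -> T, A `<=` h @` `I_n.
Proof.
move/pcard_eqP => [f].
exists (fun i => xget x0 [set a | A a /\ f a = i]) => a Aa.
have fa : `I_n (f a) by apply: (@funS _ _ _ _ f).
exists (f a) => //.
have [Ax fx] := xgetPex x0 (ex_intro (fun b => A b /\ f b = f a) a (conj Aa erefl)).
by apply: (@inj _ _ _ f); rewrite ?inE.
Qed.

Section Subgroup.
Variables (G : groupType) (Gamma : set G).
Hypothesis sgGamma : is_subgroup Gamma.

Lemma subgroup1 : Gamma 1%g. Proof. by case: sgGamma. Qed.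

Lemma subgroupV x : Gamma x -> Gamma (x^-1)%g.
Proof. by case: sgGamma => G1 GB Gx; have := GB _ _ G1 Gx; rewrite mul1g. Qed.

Lemma subgroupM x y : Gamma x -> Gamma y -> Gamma (x * y)%g.
Proof.
by move=> Gx /subgroupV Gy; case: sgGamma => _ GB; have := GB _ _ Gx Gy; rewrite invgK.
Qed.

Definition left_transversal (m : nat) (x : nat -> G) : Prop :=
  forall g, exists2 i, (i < m)%N & Gamma ((x i)^-1 * g)%g.

Lemma index_transversal m :
  has_index Gamma m -> exists x : nat -> G, left_transversal m x.
Proof.
move=> /(@card_eq_enum _ set0) [C covC].
exists (fun i => xget 1%g (C i)) => g.
have [i im Ci] := covC (lcoset g Gamma) (ex_intro2 _ _ g I erefl).
have Cig : C i g by rewrite Ci; exists 1%g; [exact: subgroup1 | rewrite mulg1].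
exists i => //.
have [c Gc <-] : lcoset g Gamma (xget 1%g (C i)).
  by rewrite -Ci; exact: xgetPex (ex_intro _ g Cig).
by rewrite invgM mulgVK; exact: subgroupV.
Qed.

End Subgroup.

Lemma nclasses_meetingS (G : groupType) (A B : {fset G}) :
  (A `<=` B)%fset -> (nclasses_meeting A <= nclasses_meeting B)%N.
Proof.
move=> /fsubsetP AB; apply: fsubset_leq_card; apply/fsubsetP => _ /imfsetP[a aA ->].
by apply/imfsetP; exists a => //; apply: AB.
Qed.

Lemma card_le_index_defect (G : groupType) (Gamma : set G) m (x : nat -> G)
    (F : {fset G}) :
  left_transversal Gamma m x ->
  (#|` F| <= m * #|` [fset y in F | `[< Gamma y >]]%fset|
     + \sum_(i < m) #|` symdiff (ltrans (x i)^-1%g F) F|)%N.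
Proof.
move=> trans; set FG := [fset y in F | `[< Gamma y >]]%fset.
pose Fi i := [fset y in F | `[< Gamma ((x i)^-1 * y)%g >]]%fset.
have card_Fi i : (#|` Fi i| <= #|` FG| + #|` symdiff (ltrans (x i)^-1%g F) F|)%N.
  rewrite -(size_map (fun y => (x i)^-1 * y)%g); apply: leq_trans (leq_card_fsetU _ _).
  apply: uniq_leq_size; first by rewrite (map_inj_uniq (mulgI _)) fset_uniq.
  move=> _ /mapP[y + ->]; rewrite in_fset /= => /andP[yF /asboolP Gy].
  have yxF : ((x i)^-1 * y)%g \in ltrans (x i)^-1%g F by apply/imfsetP; exists y.
  rewrite in_fsetU; have [yxF'|yxF'] := boolP (((x i)^-1 * y)%g \in F).
    by apply/orP; left; rewrite in_fset; apply/andP; split => //; apply/asboolP.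
  by rewrite /symdiff !in_fsetU !in_fsetD yxF' yxF orbT.
have cover_F : (#|` F| <= \sum_(i < m) #|` Fi i|)%N.
  rewrite -(big_mkord xpredT (fun i => #|` Fi i|)) /index_iota subn0.
  have -> : (\sum_(i <- iota 0 m) #|` Fi i|
      = size (flatten [seq enum_fset (Fi i) | i <- iota 0 m]))%N.
    by rewrite size_flatten /shape -map_comp sumnE big_map.
  apply: uniq_leq_size; first exact: fset_uniq.
  move=> y yF; apply/flattenP; have [i im Gy] := trans y.
  exists (enum_fset (Fi i)); first by apply/mapP; exists i; rewrite ?mem_iota.
  by rewrite in_fset; apply/andP; split => //; apply/asboolP.
apply: leq_trans cover_F _.
apply: leq_trans (_ : _ <= \sum_(i < m) (#|` FG| + #|` symdiff (ltrans (x i)^-1%g F) F|))%N _.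
  by apply: leq_sum => i _; apply: card_Fi.
by rewrite big_split /= sum_nat_const card_ord.
Qed.

Section QuotientAbelian.
Variables (G : groupType) (Gamma H : set G).
Hypotheses (sgGamma : is_subgroup Gamma) (nH : normal_in H Gamma).
Hypothesis abGH : quotient_abelian Gamma H.

Lemma conjg_quotient_abelian b c :
  Gamma b -> Gamma c -> exists2 h, H h & (b ^ c = b * h)%g.
Proof.
move=> Gb Gc; have : lcoset (b * c)%g H (b * c)%g.
  by exists 1%g; [case: nH => -[] | rewrite mulg1].
rewrite abGH // => -[h Hh bcE]; exists h => //.
by rewrite conjgE -bcE mulgA mulKg.
Qed.

Variables (m d : nat) (x y : nat -> G).
Hypotheses (trans : left_transversal Gamma m x) (covH : H `<=` y @` `I_d).

Lemma class_rep_decomposition a : Gamma a ->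
  exists2 i, (i < m)%N & exists2 j, (j < d)%N &
    a = ((xget 1%g (conjclass a)) ^ x i * y j)%g.
Proof.
move=> Ga; set r := xget 1%g (conjclass a).
have [g _ rE] : conjclass a r by apply: xgetPex; exists a; exists 1%g; rewrite ?conjg1.
have [i im Gc] := trans g^-1%g; set c := ((x i)^-1 * g^-1)%g in Gc.
exists i => //; set b := (r ^ x i)%g.
have abc : a = (b ^ c)%g by rewrite /b /c -conjgM mulVKg -rE conjgK.
have Gb : Gamma b.
  have -> : b = (a ^ c^-1)%g by rewrite abc conjgK.
  by rewrite conjgE invgK; apply: subgroupM => //; apply: subgroupM => //; apply: subgroupV.
rewrite abc; have [h Hh ->] := conjg_quotient_abelian Gb Gc.
by have [j jd <-] := covH Hh; exists j.
Qed.

Lemma card_le_nclasses (A : {fset G}) : (forall a, a \in A -> Gamma a) ->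
  (#|` A| <= nclasses_meeting A * m * d)%N.
Proof.
move=> AGamma; set P := [fset conjclass a | a in A]%fset.
set s := [seq ((xget 1%g p.1) ^ x p.2 * y j)%g
         | p <- [seq (C, i) | C <- enum_fset P, i <- iota 0 m], j <- iota 0 d].
have -> : (nclasses_meeting A * m * d = size s)%N by rewrite !size_allpairs !size_iota.
apply: uniq_leq_size; first exact: fset_uniq.
move=> a aA; have [i im [j jd aE]] := class_rep_decomposition (AGamma a aA).
apply/allpairsP; exists ((conjclass a, i), j); rewrite mem_iota /= jd; split => //.
apply/allpairsP; exists (conjclass a, i); rewrite mem_iota /= im; split => //.
by apply/imfsetP; exists a.
Qed.

Lemma card_le_nclasses_defect (F : {fset G}) :
  (#|` F| <= m ^ 2 * d * nclasses_meeting F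
     + \sum_(i < m) #|` symdiff (ltrans (x i)^-1%g F) F|)%N.
Proof.
apply: leq_trans (card_le_index_defect F trans) _; rewrite leq_add2r.
set FG := [fset a in F | `[< Gamma a >]]%fset.
have FGGamma a : a \in FG -> Gamma a by rewrite in_fset => /andP[_ /asboolP].
have FGF : (FG `<=` F)%fset by apply/fsubsetP => a; rewrite in_fset => /andP[].
have le_FG : (#|` FG| <= nclasses_meeting F * m * d)%N.
  apply: leq_trans (card_le_nclasses FGGamma) _.
  by rewrite !leq_mul2r (nclasses_meetingS FGF) !orbT.
by apply: leq_trans (leq_mul (leqnn m) le_FG) _; apply: eq_leq; lia.
Qed.

End QuotientAbelian.

Lemma ratio_ge_defect (R : realFieldType) (N c s k : nat) :
  (0 < N)%N -> (N <= k * c + s)%N ->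
  (1 - s%:R / N%:R) / k%:R <= c%:R / N%:R :> R.
Proof.
(* For k = 0 the left-hand side is 0, as x / 0 = 0. *)
move=> N_gt0 le_N; have N'_gt0 : 0 < N%:R :> R by rewrite ltr0n.
have [->|k_gt0] := posnP k; first by rewrite invr0 mulr0 divr_ge0.
rewrite ler_pdivrMr ?ltr0n // -(ler_pM2r N'_gt0) mulrBl mul1r divfK ?gt_eqF //.
rewrite mulrAC divfK ?gt_eqF // lerBlDr -natrM -natrD ler_nat mulnC.
exact: le_N.
Qed.

Lemma limn_esup_ge_cvg (R : realType) (u v : (\bar R)^nat) l :
  (forall n, (v n <= u n)%E) -> v @ \oo --> l -> (l <= limn_esup u)%E.
Proof.
move=> le_vu /cvg_esups/cvg_lim <- //; rewrite limn_esup_lim.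
apply: lee_lim; [exact: is_cvg_esups | exact: is_cvg_esups |].
apply: nearW => n; apply: ge_ereal_sup => _ [j jn <-].
by apply: le_trans (le_vu j) _; apply: ereal_sup_ubound; exists j.
Qed.

Lemma left_Folner_sum_cvg0 (R : realType) (G : groupType) (F : nat -> {fset G})
    m (x : nat -> G) :
  left_Folner R F ->
  (fun n => (\sum_(i < m) #|` symdiff (ltrans (x i) (F n)) (F n)|)%:R
            / (#|` F n|)%:R : R) @ \oo --> 0.
Proof.
move=> [_ Fol].
under eq_cvg do rewrite natr_sum mulr_suml.
have := @cvg_big _ 'I_m +%R 0 xpredT add_continuous nat \oo (index_enum _)
  (fun i n => (#|` symdiff (ltrans (x i) (F n)) (F n)|)%:R / (#|` F n|)%:R : R)
  (fun=> 0) _ (fun i _ => Fol (x i)).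
by rewrite big1 //; apply.
Qed.

Lemma cr_ge_of_card_le (R : realType) (G : groupType) (F : nat -> {fset G})
    (k m : nat) (x : nat -> G) :
  left_Folner R F ->
  (forall n, #|` F n| <= k * nclasses_meeting (F n)
     + \sum_(i < m) #|` symdiff (ltrans (x i) (F n)) (F n)|)%N ->
  ((1 / k%:R : R)%:E <= cr R F)%E.
Proof.
move=> Fol le_F; pose defect n := (\sum_(i < m)
  #|` symdiff (ltrans (x i) (F n)) (F n)|)%:R / (#|` F n|)%:R : R.
apply: (@limn_esup_ge_cvg _ _ (fun n => ((1 - defect n) / k%:R)%:E)).
  move=> n; rewrite lee_fin; apply: ratio_ge_defect (le_F n).
  by rewrite cardfs_gt0; case: Fol.
apply: cvg_EFin; first exact: nearW.
apply: cvgMr_tmp; rewrite -[X in _ --> X](subr0 1); apply: cvgB.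
  exact: cvg_cst.
exact: left_Folner_sum_cvg0.
Qed.

Theorem proposition1p25 (R : realType) (G : groupType) (Gamma H : set G)
    (m d : nat) (F : nat -> {fset G}) :
  is_subgroup Gamma -> has_index Gamma m ->
  normal_in H Gamma -> has_card H d ->
  quotient_abelian Gamma H ->
  left_Folner R F ->
  ((1 / (m ^ 2 * d)%:R : R)%:E <= cr R F)%E.
Proof.
move=> sgGamma /(index_transversal sgGamma) [x trans] nH.
move=> /(@card_eq_enum _ 1%g) [y covH] abGH Fol.
apply: (cr_ge_of_card_le (m := m) (x := fun i => (x i)^-1%g)) Fol _ => n.
exact: (card_le_nclasses_defect sgGamma nH abGH trans covH).
Qed.
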